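(* Fix an integer $p\ge 1$ and a real vector $\psi=(\psi_{w};\ 0<w\le \mathbf{1})$ indexed by the nonzero binary vectors $w\in\{0,1\}^p$, and for $v\in\{0,1\}^p$ let $\mathrm{OR}_{v}=\exp\big(\sum_{0<w\le v}\psi_w\big)$. Let $J\subset\{1,\dots,p\}$, $K=\{1,\dots,p\}\setminus J$, write $v=(v_J,v_K)$, and fix $v_K$. Define $\Delta^{(w,v_K)}\mathrm{OR}=\sum_{0\le u\le w}(-1)^{|w-u|}\mathrm{OR}_{(u,v_K)}$ for $w\in\{0,1\}^{|J|}$, and for $v_J\in\{0,1\}^{|J|}$ and $0\le i\le |v_J|$ define the prediction $$\mathrm{OR}_{(v_J,v_K),i}=\sum_{0\le w\le v_J,\ |w|\le i}\Delta^{(w,v_K)}\mathrm{OR}.$$ Then, if $0\le i<|v_J|$, $$\mathrm{OR}_{(v_J,v_K),i}=\sum_{0\le w\le v_J,\ |w|\le i}\mathrm{OR}_{(w,v_K)}\,(-1)^{i-|w|}\binom{|v_J|-1-|w|}{i-|w|},$$ and if $i=|v_J|$, then $\mathrm{OR}_{(v_J,v_K),i}=\mathrm{OR}_{(v_J,v_K)}$.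
   Context: Inequalities between binary vectors are componentwise; for a binary vector $w$, $|w|=\sum_j w_j$; $\mathbf 0$, $\mathbf 1$ are the all-zeros and all-ones vectors. Coordinates are ordered so that the factors in $J$ come first, $v=(v_J,v_K)$. Sums over $w$ range over binary vectors $w\in\{0,1\}^{|J|}$. *)

From HB Require Import structures.
From mathcomp Require Import all_boot all_order all_algebra.
From mathcomp Require Import all_classical all_reals all_analysis.
Set Implicit Arguments. Unset Strict Implicit. Unset Printing Implicit Defensive.
Import Order.TTheory GRing.Theory Num.Theory.
Local Open Scope ring_scope.

Definition bvec (p : nat) := {ffun 'I_p -> bool}.
Definition bzero (p : nat) : bvec p := [ffun=> false].
Definition bleq (p : nat) (w v : bvec p) : bool := [forall i, w i ==> v i].
Definition bwt (p : nat) (w : bvec p) : nat := #|[set i | w i]|.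
Definition onJ (p : nat) (J : {set 'I_p}) (w : bvec p) : bool :=
  [forall i, w i ==> (i \in J)].
(* (u_J, v_K): J-coordinates from u, K = complement-of-J coordinates from vK *)
Definition bglue (p : nat) (J : {set 'I_p}) (u vK : bvec p) : bvec p :=
  [ffun i => if i \in J then u i else vK i].

Definition OR (R : realType) (p : nat) (psi : bvec p -> R) (v : bvec p) : R :=
  expR (\sum_(w : bvec p | (w != bzero p) && bleq w v) psi w).

Definition DeltaOR (R : realType) (p : nat) (psi : bvec p -> R)
  (J : {set 'I_p}) (vK w : bvec p) : R :=
  \sum_(u : bvec p | onJ J u && bleq u w)
     (-1) ^+ (bwt w - bwt u) * OR psi (bglue J u vK).

Definition ORpred (R : realType) (p : nat) (psi : bvec p -> R)
  (J : {set 'I_p}) (vK vJ : bvec p) (i : nat) : R :=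
  \sum_(w : bvec p | (onJ J w && bleq w vJ && (bwt w <= i)%N)) DeltaOR psi J vK w.

From HB Require Import structures.
From mathcomp Require Import all_boot all_order all_algebra.
From mathcomp Require Import all_classical all_reals all_analysis.
From mathcomp Require Import zify.
Import Order.TTheory GRing.Theory Num.Theory.
Local Open Scope ring_scope.

(* Exchanging the two sums of the prediction, each OR_(u, v_K) with
   u <= v_J, |u| <= i, is weighted by the signed number of w with
   u <= w <= v_J and |w| <= i, i.e. by the truncated alternating binomial
   sum  sum_(k <= i - |u|) (-1)^k C(|v_J| - |u|, k).  Pascal's rule
   telescopes it to (-1)^(i-|u|) C(|v_J| - 1 - |u|, i - |u|) when
   i < |v_J|; when i = |v_J| the sum is complete and vanishes unless u = v_J. *)

Lemma sum_alt_binomS (R : pzRingType) (n m : nat) :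
  \sum_(k < m.+1) (-1) ^+ k * 'C(n.+1, k)%:R = (-1) ^+ m * 'C(n, m)%:R :> R.
Proof.
elim: m => [|m IHm]; first by rewrite big_ord1 !bin0.
rewrite big_ord_recr /= IHm binS natrD exprS mulrDr !mulN1r !mulNr.
by rewrite addrCA subrr addr0.
Qed.

Lemma sum_alt_binom (R : pzRingType) (n : nat) :
  \sum_(k < n.+1) (-1) ^+ k * 'C(n, k)%:R = (n == 0%N)%:R :> R.
Proof.
case: n => [|n]; first by rewrite big_ord1 bin0 mulr1.
by rewrite sum_alt_binomS bin_small // mulr0.
Qed.

Section SetIntervals.
Variable T : finType.
Implicit Types U V Y D : {set T}.

Lemma sum_set_interval (R : nmodType) U V (P : pred {set T}) (F : {set T} -> R) :
  U \subset V ->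
  \sum_(W : {set T} | (U \subset W) && (W \subset V) && P W) F W =
  \sum_(Y : {set T} | (Y \subset V :\: U) && P (Y :|: U)) F (Y :|: U).
Proof.
move=> UV; rewrite (reindex_onto (fun Y => Y :|: U) (fun W => W :\: U)); last first.
  move=> W /andP[/andP[UW _] _]; apply/setP => x; rewrite !inE.
  by case: (boolP (x \in U)) => [/(fintype.subsetP UW) -> | _]; rewrite ?orbT ?orbF.
apply: eq_bigl => Y; rewrite finset.subsetUr finset.subUset UV andbT.
rewrite finset.setDUl finset.setDv finset.setU0 subsetD.
by rewrite (sameP eqP finset.setDidPl) andbAC.
Qed.

Lemma sum_subsets_card (R : nmodType) D (m : nat) (g : nat -> R) :
  \sum_(Y : {set T} | (Y \subset D) && (#|Y| <= m)%N) g #|Y| =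
  \sum_(k < m.+1) g k *+ 'C(#|D|, k).
Proof.
rewrite (partition_big (fun Y => inord #|Y| : 'I_m.+1) xpredT) //.
apply: eq_bigr => k _; rewrite -cards_draws -sumr_const.
apply: eq_big => [Y | Y /andP[/andP[_ Ym] /eqP <-]]; last by rewrite inordK.
rewrite inE; case: (leqP #|Y| m) => [Ym | mY]; rewrite ?andbT ?andbF.
  by rewrite -val_eqE /= inordK.
by rewrite /= (gtn_eqF (leq_trans (ltn_ord k) mY)) andbF.
Qed.

Lemma sum_sign_set_interval (R : pzRingType) U V (n : nat) :
  U \subset V -> (#|U| <= n)%N ->
  \sum_(W : {set T} | (U \subset W) && (W \subset V) && (#|W| <= n)%N) (-1) ^+ (#|W| - #|U|) =
  \sum_(k < (n - #|U|).+1) (-1) ^+ k * 'C(#|V| - #|U|, k)%:R :> R.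
Proof.
move=> UV Un; rewrite sum_set_interval //.
have cardUD Y : Y \subset V :\: U -> #|Y :|: U| = (#|Y| + #|U|)%N.
  by rewrite subsetD => /andP[_ /disjoint_setI0 YU]; rewrite cardsU YU cards0 subn0.
rewrite (eq_big (fun Y => (Y \subset V :\: U) && (#|Y| <= n - #|U|)%N)
                (fun Y => (-1) ^+ #|Y|)) => [|Y|Y /andP[/cardUD -> _]]; last by rewrite addnK.
  by rewrite sum_subsets_card cardsDS //; apply: eq_bigr => k _; rewrite mulr_natr.
by case: (boolP (Y \subset _)) => // /cardUD ->; rewrite leq_subRL // addnC.
Qed.

End SetIntervals.

Section BinaryVectors.
Variable p : nat.
Implicit Types (u v w : bvec p) (J : {set 'I_p}).

Definition bsupp w : {set 'I_p} := [set j | w j].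

Lemma bleq_bsupp w v : bleq w v = (bsupp w \subset bsupp v).
Proof.
apply/forallP/fintype.subsetP => [wv j | wv j].
  by rewrite !inE; apply/implyP.
by apply/implyP; have := wv j; rewrite !inE.
Qed.

Lemma bsupp_bij : bijective bsupp.
Proof.
exists (fun A : {set 'I_p} => [ffun j => j \in A] : bvec p) => [w | A].
  by apply/ffunP => j; rewrite ffunE inE.
by apply/setP => j; rewrite inE ffunE.
Qed.

Lemma bleq_refl v : bleq v v.
Proof. by rewrite bleq_bsupp. Qed.

Lemma bleq_trans {u w v} : bleq u w -> bleq w v -> bleq u v.
Proof. by rewrite !bleq_bsupp; apply: fintype.subset_trans. Qed.

Lemma bwt_bleq {w v} : bleq w v -> (bwt w <= bwt v)%N.
Proof. by rewrite bleq_bsupp; apply: subset_leq_card. Qed.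

Lemma bwt_bleq_neq w v : bleq w v -> w != v -> (bwt w < bwt v)%N.
Proof.
rewrite bleq_bsupp => wv; apply: contraNT; rewrite -leqNgt => vw.
by apply/eqP/(bij_inj bsupp_bij)/eqP; rewrite eqEcard wv.
Qed.

Lemma onJ_bleq {J w v} : onJ J v -> bleq w v -> onJ J w.
Proof.
move=> /forallP Jv /forallP wv; apply/forallP => j.
by apply/implyP => /(implyP (wv j)); apply/implyP.
Qed.

Lemma onJ_bleqE J w v : onJ J v -> (onJ J w && bleq w v) = bleq w v.
Proof. by move=> Jv; apply/andb_idl/onJ_bleq. Qed.

Lemma sum_sign_bvec_interval (R : pzRingType) u v (n : nat) :
  bleq u v -> (bwt u <= n)%N ->
  \sum_(w | bleq u w && bleq w v && (bwt w <= n)%N) (-1) ^+ (bwt w - bwt u) =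
  \sum_(k < (n - bwt u).+1) (-1) ^+ k * 'C(bwt v - bwt u, k)%:R :> R.
Proof.
rewrite bleq_bsupp => uv un; rewrite -sum_sign_set_interval //.
symmetry; rewrite (reindex bsupp) /=; last exact/onW_bij/bsupp_bij.
by apply: eq_bigl => w; rewrite !bleq_bsupp.
Qed.

Lemma sum_truncated_mobius (R : pzRingType) (f : bvec p -> R) v (n : nat) :
  \sum_(w | bleq w v && (bwt w <= n)%N) \sum_(u | bleq u w) (-1) ^+ (bwt w - bwt u) * f u =
  \sum_(u | bleq u v && (bwt u <= n)%N)
     f u * \sum_(k < (n - bwt u).+1) (-1) ^+ k * 'C(bwt v - bwt u, k)%:R.
Proof.
rewrite (exchange_big_dep (fun u => bleq u v && (bwt u <= n)%N)) /=; last first.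
  move=> w u /andP[wv wn] uw.
  by rewrite (bleq_trans uw wv) (leq_trans (bwt_bleq uw) wn).
apply: eq_bigr => u /andP[uv un]; rewrite -sum_sign_bvec_interval // mulr_sumr.
by apply: eq_big => [w | w _]; [rewrite andbC andbA | rewrite commr_sign].
Qed.

Lemma ORpredE (R : realType) (psi : bvec p -> R) J vK vJ (i : nat) :
  onJ J vJ ->
  ORpred psi J vK vJ i =
  \sum_(u : bvec p | onJ J u && bleq u vJ && (bwt u <= i)%N)
     OR psi (bglue J u vK) * \sum_(k < (i - bwt u).+1) (-1) ^+ k * 'C(bwt vJ - bwt u, k)%:R.
Proof.
move=> oJ; rewrite /ORpred /DeltaOR.
under eq_bigl do rewrite onJ_bleqE //.
under [RHS]eq_bigl do rewrite onJ_bleqE //.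
rewrite -sum_truncated_mobius; apply: eq_bigr => w /andP[wv _].
by apply: eq_bigl => u; rewrite onJ_bleqE // (onJ_bleq oJ wv).
Qed.

End BinaryVectors.

Theorem proposition1 (R : realType) (p : nat) (hp : (1 <= p)%N)
  (psi : bvec p -> R) (J : {set 'I_p}) (vK vJ : bvec p) (i : nat) :
  onJ J vJ ->
  ((i < bwt vJ)%N ->
     ORpred psi J vK vJ i =
     \sum_(w : bvec p | (onJ J w && bleq w vJ && (bwt w <= i)%N))
        OR psi (bglue J w vK) * (-1) ^+ (i - bwt w)
        * ('C(bwt vJ - 1 - bwt w, i - bwt w))%:R) /\
  (i = bwt vJ -> ORpred psi J vK vJ i = OR psi (bglue J vJ vK)).
Proof.
move=> oJ; rewrite ORpredE //; split => [lt_i_vJ | ->].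
  apply: eq_bigr => u /andP[_ le_u_i].
  have -> : (bwt vJ - bwt u = (bwt vJ - 1 - bwt u).+1)%N by lia.
  by rewrite sum_alt_binomS mulrA.
rewrite (bigD1 vJ) /=; last by rewrite oJ bleq_refl leqnn.
rewrite subnn sum_alt_binom mulr1 big1 ?addr0 // => u /andP[/andP[/andP[_ uv] _] u_neq].
by rewrite sum_alt_binom subn_eq0 leqNgt bwt_bleq_neq ?mulr0.
Qed.
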